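(* Let $\Gamma$ be a connected finite simple graph on $N\ge3$ vertices whose minimum vertex degree $d$ satisfies $d\ge3$. Then $\varepsilon\le\frac{\sqrt{d-1}}{d}<\frac12$.
   Context: For a finite simple graph $\Gamma=(V,E)$ without isolated vertices, $\deg v$ is the number of neighbours of $v$ and $\mathcal N(v)=\{w\in V: w\sim v\}$. The normalized Laplacian acts on functions $f:V\to\mathbb R$ by $\Delta f(v)=f(v)-\frac{1}{\deg v}\sum_{w\sim v}f(w)$; its eigenvalues are $0=\lambda_1\le\lambda_2\le\dots\le\lambda_N$, and $\varepsilon:=\min_i|1-\lambda_i|$. $d$ denotes the minimum vertex degree. *)

From HB Require Import structures.
From mathcomp Require Import all_boot all_order all_algebra.
From mathcomp Require Import polyrcf.
Set Implicit Arguments. Unset Strict Implicit. Unset Printing Implicit Defensive.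
Import Order.TTheory GRing.Theory Num.Theory.
Local Open Scope ring_scope.

Definition simple_graph (N : nat) (adj : rel 'I_N) : Prop :=
  irreflexive adj /\ symmetric adj.

Definition gconnected (N : nat) (adj : rel 'I_N) : Prop :=
  forall u v : 'I_N, connect adj u v.

Definition deg (N : nat) (adj : rel 'I_N) (v : 'I_N) : nat :=
  #|[set w | adj v w]|.

(* minimum vertex degree (seed N exceeds every degree, so this is the true
   minimum whenever N > 0) *)
Definition mindeg (N : nat) (adj : rel 'I_N) : nat :=
  (\big[minn/N]_(v : 'I_N) deg adj v)%N.

Definition normLap (R : fieldType) (N : nat) (adj : rel 'I_N) : 'M[R]_N :=
  \matrix_(i, j) ((i == j)%:R - (adj i j)%:R / (deg adj i)%:R).

(* the (real) eigenvalues of the normalized Laplacian, i.e. the real roots of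
   its characteristic polynomial (all eigenvalues are real) *)
Definition lapEigenvalues (R : rcfType) (N : nat) (adj : rel 'I_N) : seq R :=
  rootsR (char_poly (normLap R adj)).

Definition lapEps (R : rcfType) (N : nat) (adj : rel 'I_N) : R :=
  let s := lapEigenvalues R adj in
  \big[Num.min/`|1 - head 0 s|]_(l <- s) `|1 - l|.

From HB Require Import structures.
From mathcomp Require Import all_boot all_order all_algebra.
From mathcomp Require Import polyrcf.
From mathcomp Require Import complex spectral sesquilinear.
From mathcomp Require Import ring lra.
Import Order.TTheory GRing.Theory Num.Theory.
Local Open Scope ring_scope.
Set Implicit Arguments. Unset Strict Implicit.

(* The eigenvalues of the normalized Laplacian are the 1 - rho_k, where rho_k
   runs over the spectrum of the symmetric matrix S = D^-1/2 A D^-1/2, and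
   |rho_k| <= 1. Write x = 1/d and c = x - x^2 = ((sqrt (d-1))/d)^2. Counting
   closed walks of length 2 and 4 in S gives tr S^2 = sum_i a_i, where
   a_i = sum_j S_ij^2 <= x, and tr S^4 >= sum_i (2 a_i^2 - x^2 a_i); since
   3x <= 1 this yields
     sum_k (rho_k^2 - c)(1 - rho_k^2) = - tr S^4 + (1 + c) tr S^2 - N c <= 0.
   If every rho_k^2 exceeded c, every summand would be nonnegative, hence zero,
   forcing rho_k^2 = 1 for all k and tr S^2 = N, against tr S^2 <= N x < N.
   So some rho_k^2 <= c, i.e. epsilon <= |rho_k| <= sqrt (d-1) / d. *)

Lemma mindeg_le N (adj : rel 'I_N) i : (mindeg adj <= deg adj i)%N.
Proof. by rewrite /mindeg -minEnat -leEnat; apply: bigmin_le. Qed.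

Lemma natr_deg (R : pzRingType) N (adj : rel 'I_N) i :
  (deg adj i)%:R = \sum_j (adj i j)%:R :> R.
Proof.
rewrite /deg -sum1_card natr_sum big_mkcond /=; apply: eq_bigr => j _.
by rewrite inE; case: (adj i j).
Qed.

Lemma lapEps_le_root (R : rcfType) N (adj : rel 'I_N) l :
  root (char_poly (normLap R adj)) l -> lapEps R adj <= `|1 - l|.
Proof.
move=> root_l; have p_neq0 := monic_neq0 (char_poly_monic (normLap R adj)).
have l_in : l \in lapEigenvalues R adj.
  by rewrite /lapEigenvalues -(roots_on_rootsR p_neq0) root_l andbT.
exact: (ge_bigmin_seq _ _ xpredT (fun l => `|1 - l|) l_in isT).
Qed.

Lemma sqr_sqrt_pred_div (R : rcfType) (d : nat) : (0 < d)%N ->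
  (Num.sqrt (d%:R - 1) / d%:R) ^+ 2 = d%:R^-1 - d%:R^-1 ^+ 2 :> R.
Proof.
move=> d_gt0; rewrite expr_div_n sqr_sqrtr ?subr_ge0 ?ler1n //.
by field; rewrite pnatr_eq0 -lt0n.
Qed.

Lemma sqrt_pred_div_lt_half (R : rcfType) (d : nat) : (2 < d)%N ->
  Num.sqrt (d%:R - 1) / d%:R < 1 / 2 :> R.
Proof.
move=> d_gt2; have d_gt0 : 0 < d%:R :> R by rewrite ltr0n (ltn_trans _ d_gt2).
have x_le : d%:R^-1 <= 1 / 3 :> R.
  by rewrite ler_pdivlMr // -ler_pdivlMl ?invr_gt0 // invrK mulr1 ler_nat.
rewrite -ltr_sqr ?nnegrE ?divr_ge0 ?sqrtr_ge0 ?ltW //.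
rewrite sqr_sqrt_pred_div ?(ltn_trans _ d_gt2) //.
have x_gt0 : 0 < d%:R^-1 :> R by rewrite invr_gt0.
nra.
Qed.

Lemma sum_sqr_le_sqr_sum (R : numDomainType) (I : finType) (F : I -> R) :
  (forall i, 0 <= F i) -> \sum_i F i ^+ 2 <= (\sum_i F i) ^+ 2.
Proof.
move=> F_ge0; rewrite [X in _ <= X]expr2 mulr_suml; apply: ler_sum => i _.
by rewrite expr2 ler_wpM2l // (bigD1 i) //= lerDl sumr_ge0.
Qed.

Lemma exists_le_of_sum_weighted_le0 (R : realDomainType) (I : finType)
    (t : I -> R) (c : R) :
  (forall k, t k <= 1) -> \sum_k (t k - c) * (1 - t k) <= 0 ->
  \sum_k t k < #|I|%:R -> exists k, t k <= c.
Proof.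
move=> t_le1 sum_le0 sum_lt; case: (pickP (fun k => t k <= c)) => [k|t_gt].
  by exists k.
have c_lt k : c < t k by rewrite ltNge t_gt.
have term_ge0 k : 0 <= (t k - c) * (1 - t k).
  by rewrite mulr_ge0 // subr_ge0 // ltW.
have /psumr_eq0P term0 : \sum_k (t k - c) * (1 - t k) = 0.
  by apply/eqP; rewrite eq_le sum_le0 sumr_ge0.
have t1 k : t k = 1.
  have /eqP := term0 (fun k _ => term_ge0 k) k isT.
  by rewrite mulf_eq0 subr_eq0 gt_eqF //= subr_eq0 => /eqP.
by move: sum_lt; rewrite (eq_bigr (fun=> 1)) // sumr_const ltxx.
Qed.

Lemma mulmx_conj (F : fieldType) n (U X Y : 'M[F]_n) : U \in unitmx ->
  (invmx U *m X *m U) *m (invmx U *m Y *m U) = invmx U *m (X *m Y) *m U.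
Proof. by move=> U_unit; rewrite -!mulmxA (mulmxA U) mulmxV // mul1mx. Qed.

Lemma mxtrace_conj (F : fieldType) n (U X : 'M[F]_n) : U \in unitmx ->
  \tr (invmx U *m X *m U) = \tr X.
Proof. by move=> U_unit; rewrite mxtrace_mulC mulmxA mulmxV // mul1mx. Qed.

Section RealSymmetricSpectrum.
Variables (R : rcfType) (n : nat) (A : 'M[R]_n).
Hypothesis A_sym : A^T = A.
Local Notation toC := (real_complex R).

Lemma realsym_spectral : exists2 U, U \in unitmx & exists rho : 'I_n -> R,
  map_mx toC A = invmx U *m diag_mx (\row_k toC (rho k)) *m U.
Proof.
have herm : map_mx toC A \is hermsymmx.
  apply: realsym_hermsym.
    apply/is_hermitianmxP; rewrite expr0 scale1r; apply/matrixP => i j.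
    rewrite !mxE /=; have := congr1 (fun M : 'M[R]_n => M j i) A_sym.
    by rewrite mxE => ->.
  by apply/mxOverP => i j; rewrite mxE; apply/complex_realP; exists (A i j).
have /orthomx_spectralP A_eq := hermitian_normalmx herm.
exists (spectralmx (map_mx toC A)); first exact: spectral_unit.
have diag_real := hermitian_spectral_diag_real herm.
exists (fun k => complex.Re (spectral_diag (map_mx toC A) 0 k)).
rewrite {1}A_eq; congr (_ *m diag_mx _ *m _); apply/rowP => k; rewrite mxE.
by have /complex_realP [t ->] := mxOverP diag_real 0 k.
Qed.

Lemma realsym_eigen_traces : exists rho : 'I_n -> R,
  [/\ forall k, eigenvalue A (rho k),
      \tr (A *m A) = \sum_k rho k ^+ 2 &
      \tr (A *m A *m (A *m A)) = \sum_k rho k ^+ 4].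
Proof.
have [U U_unit [rho A_eq]] := realsym_spectral.
have toC_tr X : toC (\tr X) = \tr (map_mx toC X).
  by rewrite /mxtrace rmorph_sum; apply: eq_bigr => i _; rewrite mxE.
exists rho; split.
- move=> k; rewrite eigenvalue_root_char -(fmorph_root toC) map_char_poly.
  rewrite -eigenvalue_root_char; apply/eigenvalueP; exists (row k U).
    rewrite -row_mul A_eq !mulmxA mulmxV // mul1mx mul_diag_mx.
    by apply/rowP => j; rewrite !mxE.
  apply/eqP => rowU0; have := congr1 (fun M : 'M_n => row k M 0 k) (mulmxV U_unit).
  by rewrite /= row_mul rowU0 mul0mx !mxE eqxx => /eqP; rewrite eq_sym oner_eq0.
- apply: (@complexI R); rewrite toC_tr rmorph_sum !map_mxM A_eq mulmx_conj //.
  rewrite mxtrace_conj // mulmx_diag mxtrace_diag; apply: eq_bigr => k _.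
  by rewrite !mxE rmorphXn.
- apply: (@complexI R); rewrite toC_tr rmorph_sum !map_mxM A_eq !mulmx_conj //.
  rewrite mxtrace_conj // !mulmx_diag mxtrace_diag; apply: eq_bigr => k _.
  by rewrite !mxE -!expr2 -exprM rmorphXn.
Qed.

End RealSymmetricSpectrum.

Section NormalizedAdjacency.
Variables (R : rcfType) (N : nat) (adj : rel 'I_N).
Hypothesis adj_sym : symmetric adj.
Hypothesis N_gt0 : (0 < N)%N.
Variable d : nat.
Hypothesis d_ge3 : (3 <= d)%N.
Hypothesis deg_ge : forall i, (d <= deg adj i)%N.

Local Notation dg i := ((deg adj i)%:R : R).
Let sq i := Num.sqrt (dg i).
Local Notation x := (d%:R^-1 : R).

Definition normAdj : 'M[R]_N := \matrix_(i, j) ((adj i j)%:R / (sq i * sq j)).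
Local Notation S := normAdj.
Local Notation S2 := (normAdj *m normAdj).
Local Notation rowsq i := (\sum_j S i j ^+ 2).

Let d_gt0 : 0 < d%:R :> R.
Proof. by rewrite ltr0n (leq_trans _ d_ge3). Qed.

Let dg_gt0 i : 0 < dg i.
Proof. by apply: lt_le_trans d_gt0 _; rewrite ler_nat. Qed.

Let sq_gt0 i : 0 < sq i.
Proof. by rewrite /sq sqrtr_gt0 dg_gt0. Qed.

Let sqr_sq i : sq i ^+ 2 = dg i.
Proof. by rewrite /sq sqr_sqrtr // ltW // dg_gt0. Qed.

Let inv_dg_le i : (dg i)^-1 <= x.
Proof. by rewrite lef_pV2 ?posrE ?dg_gt0 ?d_gt0 // ler_nat. Qed.

Let x_gt0 : 0 < x.
Proof. by rewrite invr_gt0 d_gt0. Qed.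

Let x_le_third : 3%:R * x <= 1.
Proof. by rewrite ler_pdivrMr ?d_gt0 // mul1r ler_nat. Qed.

Lemma normAdjC i j : S i j = S j i.
Proof. by rewrite !mxE adj_sym [sq i * _]mulrC. Qed.

Lemma trmx_normAdj : S^T = S.
Proof. by apply/matrixP => i j; rewrite mxE normAdjC. Qed.

Lemma normAdj_ge0 i j : 0 <= S i j.
Proof. by rewrite mxE divr_ge0 // mulr_ge0 // ltW // sq_gt0. Qed.

Lemma sqr_normAdj i j : S i j ^+ 2 = (adj i j)%:R * ((dg i)^-1 * (dg j)^-1).
Proof.
rewrite mxE expr_div_n exprMn !sqr_sq invfM.
by case: (adj i j); rewrite ?expr1n ?expr0n.
Qed.

Lemma sqr_normAdj_le i j : S i j ^+ 2 <= x ^+ 2.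
Proof.
have inv_ge0 k : 0 <= (dg k)^-1 by rewrite invr_ge0 ltW ?dg_gt0.
rewrite sqr_normAdj expr2 -[x * x]mul1r.
apply: ler_pM; rewrite ?mulr_ge0 ?ler_pM ?inv_dg_le //.
by case: (adj i j).
Qed.

Lemma rowsq_le i : rowsq i <= x.
Proof.
have -> : x = \sum_j (adj i j)%:R * ((dg i)^-1 * x).
  rewrite -mulr_suml -natr_deg mulrA mulfV ?mul1r //.
  by rewrite gt_eqF // dg_gt0.
apply: ler_sum => j _; rewrite sqr_normAdj ler_wpM2l // ler_wpM2l ?inv_dg_le //.
by rewrite invr_ge0 ltW ?dg_gt0.
Qed.

Lemma mxtrace_normAdj2 : \tr S2 = \sum_i rowsq i.
Proof.
apply: eq_bigr => i _; rewrite mxE; apply: eq_bigr => j _.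
by rewrite [S j i]normAdjC expr2.
Qed.

Lemma mxtrace_normAdj2_lt : \tr S2 < N%:R.
Proof.
apply: (@le_lt_trans _ _ (\sum_(i < N) x)).
  by rewrite mxtrace_normAdj2; apply: ler_sum => i _; apply: rowsq_le.
rewrite sumr_const card_ord -[_ *+ N]mulr_natr -[X in _ < X]mul1r.
by rewrite ltr_pM2r ?ltr0n //; have := x_le_third; have := x_gt0; lra.
Qed.

Lemma normAdj2C i k : S2 i k = S2 k i.
Proof.
by rewrite !mxE; apply: eq_bigr => j _; rewrite mulrC [S i j]normAdjC [S j k]normAdjC.
Qed.

(* For k != i, (S^2)_ik^2 dominates the sum of the squared walks i -> j -> k;
   the walks i -> j -> i contribute the fourth powers. *)
Lemma rowsq_normAdj2_ge i : \sum_k S2 i k ^+ 2 >=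
  \sum_k \sum_j (S i j * S j k) ^+ 2 + rowsq i ^+ 2 - \sum_j S i j ^+ 4.
Proof.
rewrite (bigD1 i) //= [X in _ <= X](bigD1 i) //=.
have -> : S2 i i = rowsq i.
  by rewrite mxE; apply: eq_bigr => j _; rewrite [S j i]normAdjC expr2.
have -> : \sum_j (S i j * S j i) ^+ 2 = \sum_j S i j ^+ 4.
  by apply: eq_bigr => j _; rewrite [S j i]normAdjC -expr2 -exprM.
suff : \sum_(k | k != i) \sum_j (S i j * S j k) ^+ 2 <=
       \sum_(k | k != i) S2 i k ^+ 2 by lra.
apply: ler_sum => k _; rewrite mxE; apply: sum_sqr_le_sqr_sum => j.
by rewrite mulr_ge0 ?normAdj_ge0.
Qed.

Lemma mxtrace_normAdj4_ge :
  \tr (S2 *m S2) >= \sum_i (2%:R * rowsq i ^+ 2 - x ^+ 2 * rowsq i).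
Proof.
have -> : \tr (S2 *m S2) = \sum_i \sum_k S2 i k ^+ 2.
  apply: eq_bigr => i _; rewrite mxE; apply: eq_bigr => k _.
  by rewrite [S2 k i]normAdj2C expr2.
apply: le_trans (ler_sum _ (fun i _ => rowsq_normAdj2_ge i)).
have walks2 : \sum_i \sum_k \sum_j (S i j * S j k) ^+ 2 = \sum_j rowsq j ^+ 2.
  transitivity (\sum_i \sum_j S i j ^+ 2 * rowsq j).
    apply: eq_bigr => i _; rewrite exchange_big; apply: eq_bigr => j _ /=.
    by rewrite mulr_sumr; apply: eq_bigr => k _; rewrite exprMn.
  rewrite exchange_big; apply: eq_bigr => j _ /=.
  by rewrite -mulr_suml expr2; congr (_ * _); apply: eq_bigr => i _; rewrite normAdjC.
have quart_le i : \sum_j S i j ^+ 4 <= x ^+ 2 * rowsq i.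
  rewrite mulr_sumr; apply: ler_sum => j _.
  by rewrite (_ : 4 = 2 * 2)%N // exprM expr2 ler_wpM2r ?sqr_ge0 ?sqr_normAdj_le.
have two_sum : \sum_i 2%:R * rowsq i ^+ 2 = \sum_i rowsq i ^+ 2 + \sum_i rowsq i ^+ 2.
  by rewrite -big_split; apply: eq_bigr => i _; rewrite mulr2n mulrDl mul1r.
have : \sum_i - (x ^+ 2 * rowsq i) <= \sum_i - \sum_j S i j ^+ 4.
  by apply: ler_sum => i _; rewrite lerN2 quart_le.
rewrite !big_split /= walks2 two_sum; lra.
Qed.

Lemma normAdj_trace_ineq :
  - \tr (S2 *m S2) + (1 + (x - x ^+ 2)) * \tr S2 - N%:R * (x - x ^+ 2) <= 0.
Proof.
(* Vertexwise, with a = rowsq i, the summand is -2 (a - x) (a - (1 - x) / 2),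
   and 0 <= a <= x <= (1 - x) / 2. *)
have vertex_le0 i : - (2%:R * rowsq i ^+ 2 - x ^+ 2 * rowsq i)
    + (1 + (x - x ^+ 2)) * rowsq i - (x - x ^+ 2) <= 0.
  have a_ge0 : 0 <= rowsq i by apply: sumr_ge0 => j _; apply: sqr_ge0.
  have := rowsq_le i; have := x_le_third; have := x_gt0; nra.
have := @sumr_le0 _ _ (index_enum 'I_N) xpredT _ (fun i _ => vertex_le0 i).
rewrite !big_split /= !sumrN -mulr_sumr sumr_const card_ord -mxtrace_normAdj2.
rewrite [N%:R * _]mulr_natl; have := mxtrace_normAdj4_ge; lra.
Qed.

Lemma normAdj_eigen_col (u : 'rV[R]_N) rho j : u *m S = rho *: u ->
  \sum_i u 0 i * (adj i j)%:R / sq i = rho * u 0 j * sq j.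
Proof.
move=> /(congr1 (fun m : 'rV[R]_N => m 0 j)); rewrite !mxE => <-.
have sq_neq0 k : sq k != 0 by rewrite gt_eqF // sq_gt0.
rewrite mulr_suml; apply: eq_bigr => i _; rewrite mxE.
by field; rewrite !sq_neq0.
Qed.

(* With g = D^-1/2 u, the eigen-equation reads sum_i adj i j g i = rho dg j g j;
   evaluate it at a vertex j where |g j| is maximal. *)
Lemma normAdj_eigen_norm_le1 rho : eigenvalue S rho -> `|rho| <= 1.
Proof.
move=> /eigenvalueP [u u_eig /matrix0Pn [i' [i0]]]; rewrite [i']ord1 => ui0.
pose g i := u 0 i / sq i.
have g_eig j : \sum_i g i * (adj i j)%:R = rho * dg j * g j.
  transitivity (\sum_i u 0 i * (adj i j)%:R / sq i).
    by apply: eq_bigr => i _; rewrite /g mulrAC.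
  rewrite (normAdj_eigen_col _ u_eig) /g -sqr_sq.
  by field; rewrite gt_eqF // sq_gt0.
have [j _ j_max] := @arg_maxP _ _ _ i0 predT (fun i => `|g i|) isT.
have gj_gt0 : 0 < `|g j|.
  apply: lt_le_trans (j_max i0 isT); rewrite normr_gt0 /g mulf_neq0 //.
  by rewrite invr_eq0 gt_eqF // sq_gt0.
have dgj_ge0 : 0 <= dg j by rewrite ltW ?dg_gt0.
have : `|rho| * dg j * `|g j| <= dg j * `|g j|.
  rewrite -[dg j]ger0_norm // -!normrM -g_eig.
  apply: le_trans (ler_norm_sum _ _ _) _.
  rewrite normrM ger0_norm // natr_deg mulr_suml; apply: ler_sum => i _.
  rewrite normrM [`|(adj i j)%:R|]ger0_norm // (adj_sym i j) mulrC.
  by rewrite ler_wpM2l //; apply: j_max.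
by rewrite -mulrA -[X in _ <= X]mul1r ler_pM2r // mulr_gt0 // dg_gt0.
Qed.

Lemma normAdj_eigen_normLap_root rho :
  eigenvalue S rho -> root (char_poly (normLap R adj)) (1 - rho).
Proof.
move=> /eigenvalueP [u u_eig u_neq0]; rewrite -eigenvalue_root_char.
apply/eigenvalueP; exists (\row_i (u 0 i * sq i)); last first.
  apply: contra u_neq0 => /eqP w0; apply/eqP/rowP => i.
  have /eqP := congr1 (fun m : 'rV[R]_N => m 0 i) w0; rewrite !mxE.
  by rewrite mulf_eq0 (gt_eqF (sq_gt0 i)) orbF => /eqP.
apply/rowP => j; rewrite !mxE.
under eq_bigr do rewrite !mxE mulrBr.
rewrite big_split /= sumrN (bigD1 j) //= eqxx mulr1 big1 ?addr0; last first.
  by move=> i /negbTE ->; rewrite mulr0.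
have -> : \sum_i u 0 i * sq i * ((adj i j)%:R / dg i) =
          \sum_i u 0 i * (adj i j)%:R / sq i.
  apply: eq_bigr => i _; rewrite -sqr_sq.
  by field; rewrite gt_eqF // sq_gt0.
by rewrite (normAdj_eigen_col _ u_eig); ring.
Qed.

Lemma exists_normLap_root_near1 : exists2 l,
  root (char_poly (normLap R adj)) l & (1 - l) ^+ 2 <= x - x ^+ 2.
Proof.
have [rho [rho_eig tr2 tr4]] := realsym_eigen_traces trmx_normAdj.
have [k rhok_le] : exists k, rho k ^+ 2 <= x - x ^+ 2.
  apply: exists_le_of_sum_weighted_le0.
  - move=> k; rewrite -real_normK ?num_real // exprn_ile1 //.
    exact/normAdj_eigen_norm_le1/rho_eig.
  - rewrite (_ : \sum_k _ = - \tr (S2 *m S2) + (1 + (x - x ^+ 2)) * \tr S2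
        - N%:R * (x - x ^+ 2)) ?normAdj_trace_ineq //.
    have -> : N%:R * (x - x ^+ 2) = \sum_(k < N) (x - x ^+ 2).
      by rewrite sumr_const card_ord mulr_natl.
    rewrite tr2 tr4 mulr_sumr -sumrN -big_split -sumrB /=.
    by apply: eq_bigr => k _; ring.
  - by rewrite card_ord -tr2 mxtrace_normAdj2_lt.
exists (1 - rho k); first exact/normAdj_eigen_normLap_root/rho_eig.
by rewrite subKr.
Qed.

End NormalizedAdjacency.

Theorem mainTheorem5 (R : rcfType) (N : nat) (adj : rel 'I_N) :
  simple_graph adj -> gconnected adj -> (3 <= N)%N -> (3 <= mindeg adj)%N ->
  lapEps R adj <= Num.sqrt ((mindeg adj)%:R - 1) / (mindeg adj)%:R /\
  Num.sqrt ((mindeg adj)%:R - 1) / (mindeg adj)%:R < 1 / 2 :> R.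
Proof.
move=> [_ adj_sym] _ N_ge3 d_ge3.
have d_gt0 : (0 < mindeg adj)%N := ltnW (ltnW d_ge3).
split; last exact: sqrt_pred_div_lt_half.
have [l root_l l_near1] := exists_normLap_root_near1 R adj_sym
  (ltnW (ltnW N_ge3)) d_ge3 (@mindeg_le N adj).
apply: le_trans (lapEps_le_root root_l) _.
have s_ge0 : 0 <= Num.sqrt ((mindeg adj)%:R - 1) / (mindeg adj)%:R :> R.
  by rewrite divr_ge0 ?sqrtr_ge0.
by rewrite -ler_sqr ?nnegrE // real_normK ?num_real // sqr_sqrt_pred_div.
Qed.
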